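(* Let $R$ be a ring and $A$ any left $R$-module. Then there exist an injective left $R$-module $P$ and a family of injective submodules of $P$, downward directed under inclusion (i.e. any two members contain a common member), whose intersection is isomorphic to $A$. Equivalently, $A$ is isomorphic to the inverse limit of an inverse system (over an upward directed index set) of injective left $R$-modules whose connecting homomorphisms are all one-to-one.
   Context: Rings are associative with unit, modules are unital. *)

From HB Require Import structures.
From mathcomp Require Import all_boot all_order all_algebra.
Set Implicit Arguments. Unset Strict Implicit. Unset Printing Implicit Defensive.
Import GRing.Theory.
Local Open Scope ring_scope.

Definition injective_module (R : pzRingType) (Q : lmodType R) : Prop :=
  forall (M N : lmodType R) (f : {linear M -> N}) (g : {linear M -> Q}),
    injective f -> exists h : {linear N -> Q}, forall x, h (f x) = g x.

Definition is_submodule (R : pzRingType) (P : lmodType R) (S : P -> Prop) : Prop :=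
  [/\ S 0, (forall x y, S x -> S y -> S (x + y)) &
      (forall (a : R) x, S x -> S (a *: x))].

(* R-linear maps into the submodule S are exactly R-linear maps
   into P with values in S, so this is literally injectivity of S. *)
Definition injective_submodule (R : pzRingType) (P : lmodType R) (S : P -> Prop)
  : Prop :=
  is_submodule S /\
  forall (M N : lmodType R) (f : {linear M -> N}) (g : {linear M -> P}),
    injective f -> (forall x, S (g x)) ->
    exists h : {linear N -> P}, (forall y, S (h y)) /\ forall x, h (f x) = g x.

(* Embed A into an injective module E by phi, and embed E, with
   kernel exactly phi(A), into an injective module F by g.  Choose a linear
   "summation" s : F^N -> F with s (delta k y) = y for all k (it extends the
   finite sum from finitely supported sequences, F being injective).  In
   P = E x F^N the submodules
     S_n = {(e, x) | x_k = 0 for k < n and g e = s x}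
   form a decreasing chain whose intersection is {(e, 0) | g e = 0}, i.e. a
   copy of A, and each S_n is injective, being the image of a linear
   retraction of the injective module P.

   Injective modules come from characters: Q/Z (as the rationals in [0,1)) is
   an injective abelian group by Zorn's lemma, so the character module
   Hom_Z(R, Q/Z) is an injective R-module; products of injectives are
   injective, and a submodule B of M is the kernel of the map sending m to
   its "orbit characters" r |-> chi (r m) for all characters chi vanishing
   on B, because characters separate points from subgroups. *)
From HB Require Import structures.
From mathcomp Require Import all_boot all_order all_algebra.
From mathcomp Require Import boolp classical_sets functions.
From Stdlib Require Import ClassicalEpsilon.
Set Implicit Arguments. Unset Strict Implicit. Unset Printing Implicit Defensive.
Import Order.TTheory GRing.Theory Num.Theory.
Local Open Scope ring_scope.

(* The circle group Q/Z, realised as the rationals in [0, 1) with addition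
   taken modulo 1: [frac x] is the fractional part of x. *)
Definition frac (x : rat) : rat := x - (Num.floor x)%:~R.

Lemma fracDz x (z : int) : frac (x + z%:~R) = frac x.
Proof.
rewrite /frac floorDrz ?intr_int // intrKfloor rmorphD /=.
by rewrite opprD addrACA subrr addr0.
Qed.

Lemma frac_itv x : 0 <= frac x < 1.
Proof.
have /andP[h1 h2] := floor_itv x.
rewrite /frac subr_ge0 h1 /= ltrBlDr.
by rewrite rmorphD /= addrC in h2.
Qed.

Lemma frac_id x : 0 <= x < 1 -> frac x = x.
Proof.
move=> x01; rewrite /frac (_ : Num.floor x = 0) ?subr0 //.
by apply: floor_def; rewrite add0r.
Qed.

Lemma fracK x : frac (frac x) = frac x.
Proof. by rewrite frac_id // frac_itv. Qed.

Lemma frac0 : frac 0 = 0.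
Proof. by rewrite frac_id // lexx ltr01. Qed.

Lemma fracz (z : int) : frac z%:~R = 0.
Proof. by rewrite -[z%:~R]add0r fracDz frac0. Qed.

Lemma fracDl x y : frac (frac x + y) = frac (x + y).
Proof.
have -> : frac x + y = (x + y) + (- Num.floor x)%:~R.
  by rewrite /frac rmorphN /= addrAC.
exact: fracDz.
Qed.

Lemma fracDr x y : frac (x + frac y) = frac (x + y).
Proof. by rewrite addrC fracDl addrC. Qed.

Lemma fracN x : frac (- frac x) = frac (- x).
Proof.
have -> : - frac x = - x + (Num.floor x)%:~R by rewrite /frac opprB addrC.
exact: fracDz.
Qed.

Definition qz := {x : rat | frac x == x}.
HB.instance Definition _ := Choice.copy qz {x : rat | frac x == x}.

Definition to_qz (x : rat) : qz := exist _ (frac x) (introT eqP (fracK x)).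

Lemma to_qzE x : val (to_qz x) = frac x. Proof. by []. Qed.
Lemma frac_val (a : qz) : frac (val a) = val a. Proof. exact/eqP/(valP a). Qed.

Definition qz_add (a b : qz) := to_qz (val a + val b).
Definition qz_opp (a : qz) := to_qz (- val a).
Definition qz_zero := to_qz 0.

Lemma qz_addA : associative qz_add.
Proof. by move=> a b c; apply: val_inj; rewrite !to_qzE fracDl fracDr addrA. Qed.
Lemma qz_addC : commutative qz_add.
Proof. by move=> a b; apply: val_inj; rewrite !to_qzE addrC. Qed.
Lemma qz_add0 : left_id qz_zero qz_add.
Proof. by move=> a; apply: val_inj; rewrite !to_qzE fracDl add0r frac_val. Qed.
Lemma qz_addN : left_inverse qz_zero qz_opp qz_add.
Proof. by move=> a; apply: val_inj; rewrite !to_qzE fracDl addNr. Qed.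

HB.instance Definition _ := GRing.isZmodule.Build qz qz_addA qz_addC qz_add0 qz_addN.

Lemma qz_val0 : val (0 : qz) = 0. Proof. exact: frac0. Qed.

Lemma qz_valMn (a : qz) n : val (a *+ n) = frac (val a *+ n).
Proof.
elim: n => [|n IH]; first by rewrite !mulr0n qz_val0 frac0.
by rewrite !mulrS [LHS]to_qzE IH fracDr.
Qed.

Lemma qz_valMz (a : qz) (z : int) : val (a *~ z) = frac (val a *~ z).
Proof.
case: z => n; first by rewrite -!pmulrn qz_valMn.
by rewrite !NegzE !mulrNz [LHS]to_qzE -!pmulrn qz_valMn fracN.
Qed.

Lemma qz_divisible (d : qz) (n : nat) : (0 < n)%N -> exists e : qz, e *+ n = d.
Proof.
move=> n_gt0; exists (to_qz (val d / n%:R)); apply: val_inj.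
have n_neq0 : n%:R != 0 :> rat by rewrite pnatr_eq0 -lt0n.
have /andP[d_ge0 d_lt1] := frac_itv (val d); rewrite frac_val in d_ge0 d_lt1.
rewrite qz_valMn to_qzE (@frac_id (val d / n%:R)).
  by rewrite -[_ *+ n]mulr_natr divfK // frac_val.
rewrite divr_ge0 ?ler0n //= ltr_pdivrMr ?ltr0n //.
by apply: (lt_le_trans d_lt1); rewrite mul1r ler1n.
Qed.

Lemma qz_torsion (n : nat) : (1 < n)%N ->
  exists e : qz, e != 0 /\ forall z : int, (n%:Z %| z)%Z -> e *~ z = 0.
Proof.
move=> n_gt1; have n_neq0 : n%:R != 0 :> rat by rewrite pnatr_eq0 -lt0n ltnW.
have inv01 : 0 <= (n%:R : rat)^-1 < 1.
  by rewrite invr_ge0 ler0n /= invf_lt1 ?ltr0n ?ltr1n // ltnW.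
exists (to_qz n%:R^-1); split.
  apply/eqP => /(congr1 val); rewrite to_qzE qz_val0 frac_id //.
  by apply/eqP; rewrite invr_eq0.
move=> z /dvdzP[q ->]; apply: val_inj.
rewrite qz_valMz qz_val0 to_qzE (@frac_id n%:R^-1) // -mulrzr intrM.
by rewrite [(n%:Z)%:~R]/= mulrCA mulVf // mulr1 fracz.
Qed.

Section PartialHom.
Variable N : zmodType.

Definition subgroup (S : N -> Prop) := S 0 /\ forall x y, S x -> S y -> S (x - y).

Definition additive_on (V : zmodType) (S : N -> Prop) (g : N -> V) :=
  forall x y, S x -> S y -> g (x - y) = g x - g y.

Variable S : N -> Prop.
Hypothesis S_sub : subgroup S.

Lemma subgroupN x : S x -> S (- x).
Proof. by case: S_sub => S0 SB Sx; rewrite -sub0r; apply: SB. Qed.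

Lemma subgroupD x y : S x -> S y -> S (x + y).
Proof. by case: S_sub => _ SB Sx Sy; rewrite -[y]opprK; apply/SB/subgroupN. Qed.

Lemma subgroupMn x n : S x -> S (x *+ n).
Proof.
case: S_sub => S0 _ Sx; elim: n => [|n IH]; first by rewrite mulr0n.
by rewrite mulrS; apply: subgroupD.
Qed.

Lemma subgroupMz x k : S x -> S (x *~ k).
Proof.
move=> Sx; case: k => n; first by rewrite -pmulrn; apply: subgroupMn.
by rewrite NegzE mulrNz -pmulrn; apply/subgroupN/subgroupMn.
Qed.

Variables (V : zmodType) (g : N -> V).
Hypothesis g_add : additive_on S g.

Lemma additive_on0 : g 0 = 0.
Proof. by case: S_sub => S0 _; have := g_add S0 S0; rewrite !subrr. Qed.

Lemma additive_onN x : S x -> g (- x) = - g x.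
Proof. by case: S_sub => S0 _ Sx; rewrite -sub0r g_add // additive_on0 sub0r. Qed.

Lemma additive_onD x y : S x -> S y -> g (x + y) = g x + g y.
Proof.
move=> Sx Sy; have SNy := subgroupN Sy.
by rewrite -{1}[y]opprK g_add // additive_onN // opprK.
Qed.

Lemma additive_onMz x k : S x -> g (x *~ k) = g x *~ k.
Proof.
have gMn n : S x -> g (x *+ n) = g x *+ n.
  case: S_sub => S0 _ Sx; elim: n => [|n IH]; first by rewrite !mulr0n additive_on0.
  by rewrite !mulrS additive_onD ?IH //; apply: subgroupMn.
case: k => n Sx; first by rewrite -!pmulrn gMn.
rewrite !NegzE !mulrNz additive_onN; last by rewrite -pmulrn; apply: subgroupMn.
by rewrite -!pmulrn gMn.
Qed.

End PartialHom.

Lemma additive_total (N V : zmodType) (g : N -> V) :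
  (forall x y, g (x - y) = g x - g y) -> forall x y, g (x + y) = g x + g y.
Proof. by move=> gB x y; apply: (@additive_onD _ (fun _ => True)). Qed.

Lemma int_subgroup (I : int -> Prop) : subgroup I ->
  (forall k, I k -> k = 0) \/
  exists n : nat, (0 < n)%N /\ forall k, I k <-> (n%:Z %| k)%Z.
Proof.
move=> I_sub; have [[k0 [Ik0 k0_neq0]]|] := pselect (exists k, I k /\ k != 0); last first.
  by move=> none; left => k Ik; apply/eqP; apply: contra_notT none => k_neq0; exists k.
right.
have pos_ex : exists n, `[< (0 < n)%N /\ I n%:Z >].
  case: k0 Ik0 k0_neq0 => n Ik0 k0_neq0.
    by exists n; apply/asboolP; rewrite lt0n; split => //; apply: contraNneq k0_neq0 => ->.
  exists n.+1; apply/asboolP; split => //.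
  by have := subgroupN I_sub Ik0; rewrite NegzE opprK.
case: (ex_minnP pos_ex) => n /asboolP[n_gt0 In] n_min.
have n_neq0 : n%:Z != 0 by rewrite eqz_nat -lt0n.
exists n; split => // k; split; last first.
  by case/dvdzP => q ->; rewrite mulrC -[q]intz mulrzr; apply: subgroupMz.
move=> Ik; have Ir : I (k %% n)%Z.
  have -> : (k %% n)%Z = k - (n%:Z * (k %/ n)%Z).
    by rewrite {2}(divz_eq k n%:Z) mulrC addrC addKr.
  apply: (proj2 I_sub) => //.
  by rewrite -[(k %/ n)%Z]intz mulrzr; apply: subgroupMz.
have r0 : (k %% n)%Z = 0.
  have := ltz_pmod k (d := n%:Z) (ltac:(by rewrite ltz_nat)).
  have := modz_ge0 k n_neq0.
  case E: (k %% n)%Z => [[|m]|m] // _ lt_mn; rewrite E in Ir.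
  have := n_min m.+1 (introT (asboolP _) (conj isT Ir)).
  by rewrite ltz_nat in lt_mn; rewrite leqNgt lt_mn.
by apply/dvdzP; exists (k %/ n)%Z; rewrite {1}(divz_eq k n%:Z) r0 addr0.
Qed.

Section ExtendByOne.
Variables (N : zmodType) (S : N -> Prop) (g : N -> qz) (m : N) (d : qz).
Hypotheses (S_sub : subgroup S) (g_add : additive_on S g)
  (d_compat : forall k, S (m *~ k) -> g (m *~ k) = d *~ k).

Definition adjoin (y : N) := exists p : N * int, S p.1 /\ y = p.1 + m *~ p.2.

Definition adjoin_ext (y : N) : qz :=
  let p := epsilon (inhabits (0, 0%Z))
             (fun p : N * int => S p.1 /\ y = p.1 + m *~ p.2) in
  g p.1 + d *~ p.2.

Lemma adjoin_extE x k : S x -> adjoin_ext (x + m *~ k) = g x + d *~ k.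
Proof.
move=> Sx; rewrite /adjoin_ext.
case: (epsilon_spec (inhabits (0, 0%Z))
  (fun p : N * int => S p.1 /\ x + m *~ k = p.1 + m *~ p.2)
  (ex_intro _ (x, k) (conj Sx erefl))).
set p := epsilon _ _ => Sp E.
have diff : x - p.1 = m *~ (p.2 - k).
  have -> : x = p.1 + (m *~ p.2 - m *~ k) by rewrite addrA -E addrK.
  by rewrite (addrC p.1) addrK mulrzBr.
have := @d_compat (p.2 - k); rewrite -diff => /(_ (proj2 S_sub _ _ Sx Sp)).
rewrite g_add // mulrzBr => /eqP; rewrite subr_eq addrAC => /eqP ->.
by rewrite subrK addrC.
Qed.

Lemma adjoin_subgroup : subgroup adjoin.
Proof.
split; first by exists (0, 0%Z); split; [case: S_sub | rewrite mulr0z addr0].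
move=> _ _ [[x1 k1] [/= S1 ->]] [[x2 k2] [/= S2 ->]].
exists (x1 - x2, k1 - k2); split; first by case: S_sub => _; apply.
by rewrite /= mulrzBr opprD addrACA.
Qed.

Lemma adjoin_ext_additive : additive_on adjoin adjoin_ext.
Proof.
move=> _ _ [[x1 k1] [/= S1 ->]] [[x2 k2] [/= S2 ->]].
have -> : x1 + m *~ k1 - (x2 + m *~ k2) = (x1 - x2) + m *~ (k1 - k2).
  by rewrite mulrzBr opprD addrACA.
rewrite !adjoin_extE //; last by case: S_sub => _; apply.
by rewrite g_add // mulrzBr opprD addrACA.
Qed.

Lemma adjoin_ext_extends x : S x -> adjoin x /\ adjoin_ext x = g x.
Proof.
move=> Sx; split; first by exists (x, 0%Z); rewrite mulr0z addr0.
by rewrite -[x]addr0 -(mulr0z m) adjoin_extE // !mulr0z !addr0.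
Qed.

Lemma adjoin_ext_at : adjoin m /\ adjoin_ext m = d.
Proof.
have S0 : S 0 by case: S_sub.
split; first by exists (0, 1%Z); rewrite add0r.
have := adjoin_extE 1 S0; rewrite add0r mulr1z => ->.
by rewrite (additive_on0 S_sub g_add) add0r.
Qed.

End ExtendByOne.

(* Partial
   extensions of g0, ordered by extension, are inductive, and a maximal one is
   total because a missing element m could be adjoined by [ExtendByOne]; the
   compatible value d at m exists since Q/Z is divisible. *)
Section QZInjective.
Variables (N : zmodType) (S0 : N -> Prop) (g0 : N -> qz).
Hypotheses (S0_sub : subgroup S0) (g0_add : additive_on S0 g0).

Record partial_ext := PartialExt {
  dom : N -> Prop;
  fn : N -> qz;
  dom_sub : subgroup dom;
  fn_add : additive_on dom fn;
  fn_ext : forall x, S0 x -> dom x /\ fn x = g0 x }.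
Arguments dom_sub : clear implicits.
Arguments fn_add : clear implicits.
Arguments fn_ext p [x].

Definition extends (p q : partial_ext) := forall x, dom p x -> dom q x /\ fn q x = fn p x.

Definition trivial_ext := @PartialExt S0 g0 S0_sub g0_add (fun x h => conj h erefl).

Section ChainUnion.
Variable A : set partial_ext.
Hypothesis A_chain : total_on A (fun p q => `[< extends p q >]).

Definition union_dom x := S0 x \/ exists p, A p /\ dom p x.
Definition union_fn x := fn (epsilon (inhabits trivial_ext) (fun p => A p /\ dom p x)) x.

Lemma union_fnE x p : A p -> dom p x -> union_fn x = fn p x.
Proof.
move=> Ap px; rewrite /union_fn.
case: (epsilon_spec (inhabits trivial_ext) (fun p => A p /\ dom p x)
  (ex_intro _ p (conj Ap px))).
set q := epsilon _ _ => Aq qx.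
by have [/asboolP/(_ x qx)[]|/asboolP/(_ x px)[]] := A_chain Aq Ap.
Qed.

Lemma union_fnE0 x : S0 x -> union_fn x = g0 x.
Proof. by move=> S0x; rewrite /union_fn; set q := epsilon _ _; case: (fn_ext q S0x). Qed.

Lemma union_common x y : union_dom x -> union_dom y ->
  (S0 x /\ S0 y) \/ exists p, [/\ A p, dom p x & dom p y].
Proof.
case=> [S0x|[p [Ap px]]] [S0y|[q [Aq qy]]].
- by left.
- by right; exists q; split => //; case: (fn_ext q S0x).
- by right; exists p; split => //; case: (fn_ext p S0y).
- right; have [/asboolP pq|/asboolP qp] := A_chain Ap Aq.
    by exists q; split => //; case: (pq x px).
  by exists p; split => //; case: (qp y qy).
Qed.

Lemma union_subgroup : subgroup union_dom.
Proof.
split; first by left; case: S0_sub.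
move=> x y ux uy; case: (union_common ux uy) => [[S0x S0y]|[p [Ap px py]]].
  by left; case: S0_sub => _; apply.
by right; exists p; split => //; case: (dom_sub p) => _; apply.
Qed.

Lemma union_additive : additive_on union_dom union_fn.
Proof.
move=> x y ux uy; case: (union_common ux uy) => [[S0x S0y]|[p [Ap px py]]].
  have S0xy : S0 (x - y) by case: S0_sub => _; apply.
  by rewrite !union_fnE0 // g0_add.
have pxy : dom p (x - y) by case: (dom_sub p) => _; apply.
by rewrite !(union_fnE Ap) // fn_add.
Qed.

Definition union_ext := @PartialExt union_dom union_fn union_subgroup union_additive
  (fun x S0x => conj (or_introl S0x) (union_fnE0 S0x)).

Lemma union_ub p : A p -> extends p union_ext.
Proof. by move=> Ap x px; split; [right; exists p | apply: union_fnE]. Qed.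

End ChainUnion.

Lemma maximal_ext_total (t : partial_ext) :
  (forall p, extends t p -> extends p t) -> forall m, dom t m.
Proof.
move=> t_max m; apply: contrapT => t_m.
have Zm_sub : subgroup (fun k => dom t (m *~ k)).
  split; first by rewrite mulr0z; case: (dom_sub t).
  by move=> k1 k2 ? ?; rewrite mulrzBr; case: (dom_sub t) => _; apply.
have [d d_compat] : exists d : qz, forall k, dom t (m *~ k) -> fn t (m *~ k) = d *~ k.
  case: (int_subgroup Zm_sub) => [Zm0|[n [n_gt0 Zm_n]]].
    exists 0 => k /Zm0 ->.
    by rewrite mulr0z mul0rz (additive_on0 (dom_sub t) (fn_add t)).
  have [d nd] := qz_divisible (fn t (m *~ n)) n_gt0.
  exists d => k /Zm_n /dvdzP [q ->].
  rewrite mulrC !mulrzA (additive_onMz (dom_sub t) (fn_add t)) -?nd ?pmulrn //.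
  by apply/Zm_n; rewrite dvdzz.
have t_ext := adjoin_ext_extends (dom_sub t) (fn_add t) d_compat.
have t'_ext x : S0 x -> adjoin (dom t) m x /\ adjoin_ext (dom t) (fn t) m d x = g0 x.
  by move=> S0x; have [tx <-] := fn_ext t S0x; apply: t_ext.
pose t' := PartialExt (adjoin_subgroup m (dom_sub t))
  (adjoin_ext_additive (dom_sub t) (fn_add t) d_compat) t'_ext.
have t_t' : extends t t' by move=> x; apply: t_ext.
have [am _] := adjoin_ext_at (dom_sub t) (fn_add t) d_compat.
by have [] := t_max t' t_t' m am.
Qed.

Lemma qz_extend : exists h : N -> qz,
  (forall x y, h (x - y) = h x - h y) /\ (forall x, S0 x -> h x = g0 x).
Proof.
pose le p q := `[< extends p q >].
have le_refl p : le p p by apply/asboolP.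
have le_trans p q r : le p q -> le q r -> le p r.
  move=> /asboolP pq /asboolP qr; apply/asboolP => x px.
  have [qx <-] := pq x px; exact: qr x qx.
have chain_ub A : total_on A le -> exists t, forall p, A p -> le p t.
  by move=> A_chain; exists (union_ext A_chain) => p Ap; apply/asboolP/union_ub.
have [t t_max] := ZL_preorder trivial_ext le_refl le_trans chain_ub.
have t_total := @maximal_ext_total t (fun p tp => asboolW (t_max p (asboolT tp))).
exists (fn t); split; first by move=> x y; apply: fn_add.
by move=> x S0x; case: (fn_ext t S0x).
Qed.

End QZInjective.

(* Take the zero character
   on B, give m a nonzero value compatible with the order of m modulo B, and
   extend. *)
Lemma qz_separate (N : zmodType) (B : N -> Prop) (m : N) : subgroup B -> ~ B m ->
  exists h : N -> qz, [/\ (forall x y, h (x - y) = h x - h y),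
    (forall x, B x -> h x = 0) & h m <> 0].
Proof.
move=> B_sub Bm.
have zero_add : additive_on B (fun _ => 0 : qz) by move=> x y _ _; rewrite subr0.
have Zm_sub : subgroup (fun k => B (m *~ k)).
  split; first by rewrite mulr0z; case: B_sub.
  by move=> k1 k2 ? ?; rewrite mulrzBr; case: B_sub => _; apply.
have [d [d_neq0 d_compat]] : exists d : qz, d != 0 /\
    forall k, B (m *~ k) -> (0 : qz) = d *~ k.
  case: (int_subgroup Zm_sub) => [Zm0|[n [n_gt0 Zm_n]]].
    have [e [e_neq0 _]] := @qz_torsion 2 isT.
    by exists e; split => // k /Zm0 ->; rewrite mulr0z.
  have n_gt1 : (1 < n)%N.
    rewrite ltn_neqAle n_gt0 andbT; apply/eqP => n1; apply: Bm.
    by rewrite -[m]mulr1z; apply/Zm_n; rewrite -n1 dvdzz.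
  have [e [e_neq0 e_tors]] := qz_torsion n_gt1.
  by exists e; split => // k /Zm_n /e_tors ->.
have [h [h_add h_ext]] := qz_extend (adjoin_subgroup m B_sub)
  (adjoin_ext_additive B_sub zero_add d_compat).
exists h; split => // [x Bx|].
  have [ax ax0] := adjoin_ext_extends B_sub zero_add d_compat Bx.
  by rewrite h_ext.
have [am am_d] := adjoin_ext_at B_sub zero_add d_compat.
by rewrite h_ext // am_d; apply/eqP.
Qed.

Section MkLinear.
Variables (R : pzRingType) (U V : lmodType R) (f : U -> V) (f_lin : linear f).
Definition linear_fun := f.
HB.instance Definition _ := GRing.isLinear.Build R U V *:%R linear_fun f_lin.
Definition mkLinear : {linear U -> V} := linear_fun.
Lemma mkLinearE x : mkLinear x = f x. Proof. by []. Qed.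
End MkLinear.

Section CharacterModule.
Variable R : pzRingType.

Definition additive_qz (f : R -> qz) := forall x y, f (x - y) = f x - f y.

Record charmod := Char { char_fun : R -> qz; char_add : additive_qz char_fun }.
HB.instance Definition _ := gen_eqMixin charmod.
HB.instance Definition _ := gen_choiceMixin charmod.

Lemma charmod_eq (a b : charmod) : char_fun a = char_fun b -> a = b.
Proof.
case: a b => [fa pa] [fb pb] /= E; subst fb.
by rewrite (Prop_irrelevance pa pb).
Qed.

Lemma char_funD (a : charmod) x y : char_fun a (x + y) = char_fun a x + char_fun a y.
Proof. exact/additive_total/char_add. Qed.

Lemma zero_char_add : additive_qz (fun _ => 0). Proof. by move=> x y; rewrite subr0. Qed.
Lemma add_char_add (a b : charmod) : additive_qz (fun r => char_fun a r + char_fun b r).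
Proof. by move=> x y; rewrite !char_add opprD addrACA. Qed.
Lemma opp_char_add (a : charmod) : additive_qz (fun r => - char_fun a r).
Proof. by move=> x y; rewrite char_add opprB addrC opprK. Qed.
Lemma scale_char_add (c : R) (a : charmod) : additive_qz (fun r => char_fun a (r * c)).
Proof. by move=> x y; rewrite mulrBl char_add. Qed.

Definition char_zero := Char zero_char_add.
Definition char_plus (a b : charmod) := Char (add_char_add a b).
Definition char_opp (a : charmod) := Char (opp_char_add a).
Definition char_scale (c : R) (a : charmod) := Char (scale_char_add c a).

Lemma char_plusA : associative char_plus.
Proof. by move=> a b c; apply/charmod_eq/funext => r /=; rewrite addrA. Qed.
Lemma char_plusC : commutative char_plus.
Proof. by move=> a b; apply/charmod_eq/funext => r /=; rewrite addrC. Qed.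
Lemma char_plus0 : left_id char_zero char_plus.
Proof. by move=> a; apply/charmod_eq/funext => r /=; rewrite add0r. Qed.
Lemma char_plusN : left_inverse char_zero char_opp char_plus.
Proof. by move=> a; apply/charmod_eq/funext => r /=; rewrite addNr. Qed.
HB.instance Definition _ :=
  GRing.isZmodule.Build charmod char_plusA char_plusC char_plus0 char_plusN.

Lemma char_scaleA a b v : char_scale a (char_scale b v) = char_scale (a * b) v.
Proof. by apply/charmod_eq/funext => r /=; rewrite mulrA. Qed.
Lemma char_scale1 : left_id 1 char_scale.
Proof. by move=> a; apply/charmod_eq/funext => r /=; rewrite mulr1. Qed.
Lemma char_scaleDr : right_distributive char_scale +%R.
Proof. by move=> c a b; apply/charmod_eq/funext. Qed.
Lemma char_scaleDl v : {morph char_scale^~ v : a b / a + b}.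
Proof. by move=> a b; apply/charmod_eq/funext => r /=; rewrite mulrDr char_funD. Qed.
HB.instance Definition _ := GRing.Zmodule_isLmodule.Build R charmod
  char_scaleA char_scale1 char_scaleDr char_scaleDl.

(* Baer-type argument: to extend g : M -> charmod along f : M -> N, extend the
   Q/Z-valued map f m |-> g m (1) to h0 : N -> Q/Z and set h n = (r |-> h0 (r n)). *)
Lemma charmod_injective : injective_module charmod.
Proof.
move=> M N f g f_inj.
pose S0 n := exists m, f m = n.
have S0_sub : subgroup S0.
  split; first by exists 0; rewrite linear0.
  by move=> _ _ [a <-] [b <-]; exists (a - b); rewrite linearB.
pose g0 n := char_fun (g (epsilon (inhabits 0) (fun m => f m = n))) 1.
have g0E m : g0 (f m) = char_fun (g m) 1.
  rewrite /g0.
  have := epsilon_spec (inhabits 0) (fun m' => f m' = f m) (ex_intro _ m erefl).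
  by move/f_inj ->.
have g0_add : additive_on S0 g0.
  by move=> _ _ [a <-] [b <-]; rewrite -linearB !g0E linearB.
have [h0 [h0_add h0_ext]] := qz_extend S0_sub g0_add.
have h_add n : additive_qz (fun r => h0 (r *: n)).
  by move=> x y; rewrite scalerBl h0_add.
have h_lin : linear (fun n => Char (h_add n)).
  move=> a u v; apply/charmod_eq/funext => r /=.
  by rewrite scalerDr (additive_total h0_add) scalerA.
exists (mkLinear h_lin) => m; apply/charmod_eq/funext => r /=.
rewrite -linearZ h0_ext; last by exists (r *: m).
by rewrite g0E linearZ /= mul1r.
Qed.

End CharacterModule.

Lemma power_injective (R : pzRingType) (T : Type) (Q : lmodType R) :
  injective_module Q -> injective_module (T -> Q).
Proof.
move=> Q_inj M N f g f_inj.
have zero_lin : linear (fun _ : N => 0 : Q) by move=> a u v; rewrite scaler0 addr0.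
have g_lin t : linear (fun m => g m t) by move=> a u v; rewrite linearP.
pose ext t := epsilon (inhabits (mkLinear zero_lin))
  (fun h : {linear N -> Q} => forall x, h (f x) = mkLinear (g_lin t) x).
have extE t x : ext t (f x) = g x t.
  by have := epsilon_spec _ _ (Q_inj _ _ f (mkLinear (g_lin t)) f_inj); apply.
have h_lin : linear (fun n t => ext t n).
  by move=> a u v; apply/funext => t; rewrite linearP.
by exists (mkLinear h_lin) => x; apply/funext => t; rewrite mkLinearE extE.
Qed.

Lemma prod_injective (R : pzRingType) (E Q : lmodType R) :
  injective_module E -> injective_module Q -> injective_module (E * Q)%type.
Proof.
move=> E_inj Q_inj M N f g f_inj.
have g1_lin : linear (fun m => (g m).1) by move=> a u v; rewrite linearP.
have g2_lin : linear (fun m => (g m).2) by move=> a u v; rewrite linearP.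
have [h1 h1E] := E_inj _ _ f (mkLinear g1_lin) f_inj.
have [h2 h2E] := Q_inj _ _ f (mkLinear g2_lin) f_inj.
have h_lin : linear (fun n => (h1 n, h2 n)) by move=> a u v; rewrite !linearP.
by exists (mkLinear h_lin) => x; rewrite mkLinearE h1E h2E !mkLinearE; case: (g x).
Qed.

(* The kernel is exactly B because characters separate points from B. *)
Section EmbedWithKernel.
Variables (R : pzRingType) (M : lmodType R) (B : M -> Prop).

Definition vanishing_char := {chi : M -> qz |
  (forall x y, chi (x - y) = chi x - chi y) /\ (forall b, B b -> chi b = 0)}.

Lemma orbit_char_add (m : M) (chi : vanishing_char) :
  additive_qz (fun r : R => sval chi (r *: m)).
Proof. by move=> x y; rewrite scalerBl (proj1 (svalP chi)). Qed.

Definition embed_fun (m : M) : vanishing_char -> charmod R :=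
  fun chi => Char (orbit_char_add m chi).

Lemma embed_linear : linear embed_fun.
Proof.
move=> a u v; apply/funext => chi; apply/charmod_eq/funext => r /=.
by rewrite scalerDr (additive_total (proj1 (svalP chi))) scalerA.
Qed.

Hypothesis B_sub : is_submodule B.

Lemma embed_ker m : embed_fun m = 0 <-> B m.
Proof.
have [B0 BD BZ] := B_sub.
split=> [m0|Bm]; last first.
  apply/funext => chi; apply/charmod_eq/funext => r /=.
  by rewrite (proj2 (svalP chi)) //; apply: BZ.
apply: contrapT => Bm.
have B_subgroup : subgroup B.
  by split => // x y Bx By; rewrite -scaleN1r; apply/BD/BZ.
have [h [h_add hB hm]] := qz_separate B_subgroup Bm.
have := congr1 (fun F => char_fun (F (exist _ h (conj h_add hB))) 1) m0.
by rewrite /= scale1r.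
Qed.

End EmbedWithKernel.

Lemma embedding_with_kernel (R : pzRingType) (M : lmodType R) (B : M -> Prop) :
  is_submodule B -> exists (E : lmodType R) (iota : {linear M -> E}),
    injective_module E /\ forall m, iota m = 0 <-> B m.
Proof.
move=> B_sub; exists (vanishing_char B -> charmod R), (mkLinear (embed_linear B)).
by split; [apply/power_injective/charmod_injective | apply: embed_ker].
Qed.

Lemma zero_submodule (R : pzRingType) (M : lmodType R) : is_submodule (fun m : M => m = 0).
Proof. by split=> [|x y -> ->|a x ->]; rewrite ?addr0 ?scaler0. Qed.

Lemma image_submodule (R : pzRingType) (M N : lmodType R) (f : {linear M -> N}) :
  is_submodule (fun n => exists m, f m = n).
Proof.
split; first by exists 0; rewrite linear0.
  by move=> _ _ [a <-] [b <-]; exists (a + b); rewrite linearD.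
by move=> c _ [a <-]; exists (c *: a); rewrite linearZ.
Qed.

(* The image of a linear retraction of an injective module is an injective
   submodule: extend into P, then project back with the retraction. *)
Lemma retract_injective (R : pzRingType) (P : lmodType R) (S : P -> Prop)
    (rho : {linear P -> P}) :
  injective_module P -> (forall y, S (rho y)) -> (forall y, S y -> rho y = y) ->
  injective_submodule S.
Proof.
move=> P_inj rho_in rho_id.
have S_fix y : S y <-> rho y = y by split=> [/rho_id|<-].
split.
  split=> [|x y /S_fix Sx /S_fix Sy|a x /S_fix Sx]; apply/S_fix.
  - exact: linear0.
  - by rewrite linearD Sx Sy.
  - by rewrite linearZ Sx.
move=> M N f g f_inj gS.
have [h hE] := P_inj _ _ f g f_inj.
exists (rho \o h)%FUN; split=> [y|x]; first exact: rho_in.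
by rewrite /= hE rho_id.
Qed.

Section Delta.
Variables (R : pzRingType) (F : lmodType R).

Definition delta (k : nat) (y : F) : nat -> F := fun j => if j == k then y else 0.

Lemma delta_linear k : linear (delta k).
Proof.
move=> a u v; apply/funext => j; rewrite /delta addrfctE scalrfctE /=.
by case: eqP; rewrite ?scaler0 ?addr0.
Qed.
HB.instance Definition _ k := GRing.isLinear.Build R F (nat -> F) *:%R (delta k)
  (delta_linear k).

End Delta.

(* Every injective module F carries a linear "summation" of arbitrary
   sequences s : F^N -> F with s (delta k y) = y: the finite sum on the
   submodule of finitely supported sequences extends to F^N by injectivity. *)
Section Summation.
Variables (R : pzRingType) (F : lmodType R).

Definition vanishes_from (x : nat -> F) (n : nat) := forall k, (n <= k)%N -> x k = 0.

Definition fin_supp := [pred x : nat -> F | `[< exists n, vanishes_from x n >]].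

Lemma fin_supp_closed : subsemimod_closed fin_supp.
Proof.
split; [split=> [|x y /asboolP[nx x0] /asboolP[ny y0]] | move=> a x /asboolP[n x0]];
  apply/asboolP.
- by exists 0%N.
- exists (maxn nx ny) => k; rewrite geq_max => /andP[kx ky].
  by rewrite addrfctE /= x0 // y0 // addr0.
- by exists n => k kn; rewrite scalrfctE /= x0 ?scaler0.
Qed.
HB.instance Definition _ := GRing.isSubmodClosed.Build R (nat -> F) fin_supp
  fin_supp_closed.

Record finsupp := FinSupp { fs_val : nat -> F; fs_valP : fs_val \in fin_supp }.
HB.instance Definition _ := [isSub for fs_val].
HB.instance Definition _ := [Choice of finsupp by <:].
HB.instance Definition _ := [SubChoice_isSubLmodule of finsupp by <:].

Lemma sum_vanishing (x : nat -> F) n n' : vanishes_from x n -> (n <= n')%N ->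
  \sum_(k < n') x k = \sum_(k < n) x k.
Proof.
move=> x0; elim: n' => [|n' IH]; first by rewrite leqn0 => /eqP ->.
rewrite leq_eqVlt => /orP[/eqP -> //|].
by rewrite ltnS => le_nn'; rewrite big_ord_recr /= x0 // addr0 IH.
Qed.

Definition supp_bound (x : nat -> F) := epsilon (inhabits 0%N) (vanishes_from x).

Definition fs_sum (x : finsupp) : F := \sum_(k < supp_bound (val x)) val x k.

Lemma fs_sumE (x : finsupp) n : vanishes_from (val x) n -> fs_sum x = \sum_(k < n) val x k.
Proof.
move=> x0; have /asboolP[n0 xn0] := valP x.
have xb := epsilon_spec (inhabits 0%N) (vanishes_from (val x)) (ex_intro _ n0 xn0).
rewrite /fs_sum -(@sum_vanishing _ _ (maxn n (supp_bound (val x)))) ?leq_maxr //.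
by rewrite (@sum_vanishing _ n) ?leq_maxl.
Qed.

Lemma fs_sum_linear : linear fs_sum.
Proof.
move=> a x y; have /asboolP[nx x0] := valP x; have /asboolP[ny y0] := valP y.
have xm : vanishes_from (val x) (maxn nx ny).
  by move=> k; rewrite geq_max => /andP[/x0].
have ym : vanishes_from (val y) (maxn nx ny).
  by move=> k; rewrite geq_max => /andP[_ /y0].
have xym : vanishes_from (val (a *: x + y)) (maxn nx ny).
  move=> k km; rewrite linearP !fctE.
  by move: (xm k km) (ym k km) => /= -> ->; rewrite scaler0 addr0.
rewrite (fs_sumE xym) (fs_sumE xm) (fs_sumE ym) scaler_sumr -big_split /=.
by apply: eq_bigr => k _; rewrite !fctE.
Qed.

Lemma summation_exists : injective_module F ->
  exists s : {linear (nat -> F) -> F}, forall k y, s (delta k y) = y.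
Proof.
move=> F_inj.
have [s sE] := F_inj _ _ (val : {linear finsupp -> nat -> F}) (mkLinear fs_sum_linear)
  val_inj.
exists s => k y.
have dk0 : vanishes_from (delta k y) k.+1.
  by move=> j; rewrite /delta; case: eqP => // ->; rewrite ltnn.
have dk : delta k y \in fin_supp by apply/asboolP; exists k.+1.
rewrite -[delta k y]/(val (FinSupp dk)) sE mkLinearE (@fs_sumE (FinSupp dk) _ dk0).
rewrite big_ord_recr /=.
rewrite big1 ?add0r => [|j _]; first by rewrite /delta eqxx.
by rewrite /delta (ltn_eqF (ltn_ord j)).
Qed.

End Summation.

Section TailConstruction.
Variables (R : pzRingType) (E F : lmodType R).
Variables (g : {linear E -> F}) (s : {linear (nat -> F) -> F}).
Hypothesis s_delta : forall k y, s (delta k y) = y.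

Definition tail_sub (n : nat) (p : E * (nat -> F)) : Prop :=
  (forall k, (k < n)%N -> p.2 k = 0) /\ g p.1 = s p.2.

Definition cut (n : nat) (x : nat -> F) : nat -> F := fun k => if (k < n)%N then 0 else x k.

Lemma cut_linear n : linear (cut n).
Proof.
move=> a u v; apply/funext => k; rewrite /cut !fctE.
by case: ifP; rewrite ?scaler0 ?addr0.
Qed.
HB.instance Definition _ n := GRing.isLinear.Build R (nat -> F) (nat -> F) *:%R (cut n)
  (cut_linear n).

Definition tail_retract (n : nat) (p : E * (nat -> F)) : E * (nat -> F) :=
  (p.1, cut n p.2 - delta n (s (cut n p.2)) + delta n (g p.1)).

Lemma tail_retract_linear n : linear (tail_retract n).
Proof.
move=> a [e1 x1] [e2 x2]; rewrite /tail_retract /=; congr (_, _) => //=.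
rewrite !(linearP (cut n)) (linearP s) (linearP g) !(linearP (delta n)).
by rewrite scalerDr scalerBr opprD [X in X + _]addrACA [LHS]addrACA.
Qed.

Lemma tail_retract_in n p : tail_sub n (tail_retract n p).
Proof.
rewrite /tail_sub /tail_retract /=; split; last first.
  by rewrite linearD linearB !s_delta subrr add0r.
move=> k kn; rewrite !fctE /cut /delta kn (ltn_eqF kn).
by rewrite subr0 addr0.
Qed.

Lemma tail_retract_id n p : tail_sub n p -> tail_retract n p = p.
Proof.
case: p => e x [x0 gx] /=; rewrite /tail_retract /=.
have -> : cut n x = x by apply/funext => k; rewrite /cut; case: ifP => // /x0.
by rewrite -gx subrK.
Qed.

Lemma tail_sub_injective n : injective_module E -> injective_module F ->
  injective_submodule (tail_sub n).
Proof.
move=> E_inj F_inj.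
apply: (@retract_injective _ _ (tail_sub n) (mkLinear (tail_retract_linear n))).
- exact/prod_injective/power_injective.
- exact: tail_retract_in.
- exact: tail_retract_id.
Qed.

Lemma tail_sub_decreasing m n p : (m <= n)%N -> tail_sub n p -> tail_sub m p.
Proof. by move=> mn [x0 gx]; split=> // k km; apply/x0/leq_trans/mn. Qed.

Lemma tail_sub_meet p : (forall n, tail_sub n p) <-> p.2 = 0 /\ g p.1 = 0.
Proof.
case: p => e x /=; split=> [p_in|[-> ge] n].
  have x0 : x = 0 by apply/funext => k; apply: (p_in k.+1).1.
  by split=> //; rewrite (p_in 0%N).2 x0 linear0.
by split=> //; rewrite ge linear0.
Qed.

End TailConstruction.

Theorem theorem2 (R : pzRingType) (A : lmodType R) :
  exists (P : lmodType R) (I : Type) (S : I -> P -> Prop),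
    [/\ injective_module P,
        inhabited I,
        (forall i, injective_submodule (S i)),
        (forall i j, exists k, forall x, S k x -> S i x /\ S j x) &
        exists phi : {linear A -> P},
          injective phi /\
          (forall y : P, (forall i, S i y) <-> exists a, phi a = y)].
Proof.
have [E [phi [E_inj phi_ker]]] := embedding_with_kernel (zero_submodule A).
have [F [g [F_inj g_ker]]] := embedding_with_kernel (image_submodule phi).
have [s s_delta] := summation_exists F_inj.
exists (E * (nat -> F))%type, nat, (tail_sub g s); split.
- exact/prod_injective/power_injective.
- exact: inhabits 0%N.
- by move=> n; apply: tail_sub_injective.
- move=> i j; exists (maxn i j) => p p_in.
  by split; apply: tail_sub_decreasing p_in; rewrite leq_max leqnn ?orbT.
have inl_lin : linear (fun a => (phi a, 0 : nat -> F)).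
  by move=> c a b; rewrite linearP; congr (_, _); rewrite /= scaler0 addr0.
exists (mkLinear inl_lin); split.
  by apply: raddf_inj => a [/phi_ker].
move=> [e x]; rewrite tail_sub_meet g_ker /=.
split=> [[-> [a <-]]|[a [<- <-]]]; last by split=> //; exists a.
by exists a.
Qed.
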